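(* Let $p,q\geq1$ be integers, $\alpha_0=\arctan\sqrt{q/p}$ and $P_0=(\alpha_0,\alpha_0)$. Let $(\vartheta(s),\alpha(s))$ be a trajectory of the differential system $$\dot\vartheta=3\sin\vartheta\cos\vartheta\sin(\alpha-\vartheta),\qquad \dot\alpha=q\cos\alpha\cos\vartheta-p\sin\alpha\sin\vartheta,$$ and suppose that for some $s_0$ one has $0<\vartheta(s_0)<\pi/2$ and $\vartheta(s_0)-\pi/2\leq\alpha(s_0)\leq\vartheta(s_0)+\pi/2$. Then $\lim_{s\to+\infty}(\vartheta(s),\alpha(s))=P_0$. *)

From Stdlib Require Import Reals.
From Coquelicot Require Import Coquelicot.
Open Scope R_scope.

Definition alpha0 (p q : nat) : R := atan (sqrt (INR q / INR p)).

(* The vector field is smooth and globally bounded, so every maximal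
   solution is defined on all of R. *)
Definition is_trajectory (p q : nat) (theta alpha : R -> R) : Prop :=
  forall s : R,
    is_derive theta s (3 * sin (theta s) * cos (theta s) * sin (alpha s - theta s)) /\
    is_derive alpha s (INR q * cos (alpha s) * cos (theta s)
                       - INR p * sin (alpha s) * sin (theta s)).

(* Let u = alpha - theta be the gap.  Along a trajectory (sin theta cos theta)^2 decays at
   most like e^(-6 s), so theta never leaves (0, pi/2).  Once |u| < pi/2 (which happens right
   away if u starts on the boundary, where u' points inwards), the quantity
   Q = sin^q theta cos^p theta cos^3 u is nondecreasing, positive and at most 1; this traps
   sin theta, cos theta and cos u above Q(s1) > 0.  Since Q' >= c sin^2 u and u is Lipschitz,
   u -> 0 (Barbalat).  Then u' = kappa(theta) + o(1) with
   kappa(theta) = q cos^2 theta - p sin^2 theta Lipschitz, so kappa(theta) -> 0 (Barbalat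
   again), and in the trapping region kappa vanishes only at alpha_0. *)

From Stdlib Require Import Reals Lra Lia Psatz Classical.
From Coquelicot Require Import Coquelicot.
Open Scope R_scope.

Definition lipschitz (L : R) (f : R -> R) : Prop :=
  forall x y, Rabs (f y - f x) <= L * Rabs (y - x).

Lemma is_lim_p_infty_iff (f : R -> R) (l : R) :
  is_lim f p_infty l <->
  forall eps, 0 < eps -> exists N, forall x, N <= x -> Rabs (f x - l) < eps.
Proof.
  rewrite <- is_lim_spec; split.
  - intros H eps Heps. destruct (H (mkposreal eps Heps)) as [N HN].
    exists (N + 1). intros x Hx. apply HN. lra.
  - intros H eps. destruct (H eps (cond_pos eps)) as [N HN].
    exists N. intros x Hx. apply HN. lra.
Qed.

Lemma is_lim_of_Rabs_le (f g : R -> R) (l C N : R) :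
  (forall x, N <= x -> Rabs (f x - l) <= C * Rabs (g x)) ->
  is_lim g p_infty 0 -> is_lim f p_infty l.
Proof.
  rewrite !is_lim_p_infty_iff. intros Hfg Hg eps Heps.
  set (C' := Rabs C + 1).
  assert (HC : C <= C') by (unfold C'; pose proof (Rle_abs C); lra).
  assert (HC' : 0 < C') by (unfold C'; pose proof (Rabs_pos C); lra).
  destruct (Hg (eps / C')) as [N' HN']; [apply Rdiv_lt_0_compat; lra|].
  exists (Rmax N N'). intros x Hx.
  specialize (Hfg x (Rle_trans _ _ _ (Rmax_l _ _) Hx)).
  specialize (HN' x (Rle_trans _ _ _ (Rmax_r _ _) Hx)). rewrite Rminus_0_r in HN'.
  assert (C' * Rabs (g x) < eps).
  { apply (Rmult_lt_compat_l C') in HN'; [|lra]. field_simplify in HN'; lra. }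
  pose proof (Rabs_pos (g x)). nra.
Qed.

Lemma is_lim_0_of_sqr_le (f g : R -> R) (C N : R) :
  (forall x, N <= x -> f x ^ 2 <= C * Rabs (g x)) ->
  is_lim g p_infty 0 -> is_lim f p_infty 0.
Proof.
  rewrite !is_lim_p_infty_iff. intros Hfg Hg eps Heps.
  set (C' := Rabs C + 1).
  assert (HC : C <= C') by (unfold C'; pose proof (Rle_abs C); lra).
  assert (HC' : 0 < C') by (unfold C'; pose proof (Rabs_pos C); lra).
  destruct (Hg (eps ^ 2 / C')) as [N' HN']; [apply Rdiv_lt_0_compat; nra|].
  exists (Rmax N N'). intros x Hx.
  specialize (Hfg x (Rle_trans _ _ _ (Rmax_l _ _) Hx)).
  specialize (HN' x (Rle_trans _ _ _ (Rmax_r _ _) Hx)). rewrite Rminus_0_r in HN'.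
  assert (C' * Rabs (g x) < eps ^ 2).
  { apply (Rmult_lt_compat_l C') in HN'; [|lra]. field_simplify in HN'; lra. }
  rewrite Rminus_0_r, <- (pow2_abs (f x)) in *. pose proof (Rabs_pos (g x)).
  destruct (Rlt_or_le (Rabs (f x)) eps) as [Hlt|Hge]; [exact Hlt | nra].
Qed.

Section MeanValue.

Variables (f df : R -> R).
Hypothesis f_derive : forall x, is_derive f x (df x).

Lemma continuity_of_derive : continuity f.
Proof.
  intros x. apply continuity_pt_filterlim, (ex_derive_continuous f x).
  exists (df x). apply f_derive.
Qed.

Lemma increment_between (a b : R) : a <= b ->
  exists c, a <= c <= b /\ f b - f a = df c * (b - a).
Proof.
  intros Hab. destruct (MVT_gen f a b df) as [c [Hc E]].
  - intros x _. apply f_derive.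
  - intros x _. apply continuity_of_derive.
  - rewrite Rmin_left, Rmax_right in Hc by lra. exists c. split; assumption.
Qed.

Lemma increment_ge (a b m : R) : a <= b ->
  (forall x, a <= x <= b -> m <= df x) -> m * (b - a) <= f b - f a.
Proof.
  intros Hab Hm. destruct (increment_between a b Hab) as [c [Hc ->]].
  apply Rmult_le_compat_r; [lra | exact (Hm c Hc)].
Qed.

Lemma Rabs_increment_le (a b M : R) : a <= b ->
  (forall x, a <= x <= b -> Rabs (df x) <= M) -> Rabs (f b - f a) <= M * (b - a).
Proof.
  intros Hab HM. destruct (increment_between a b Hab) as [c [Hc ->]].
  rewrite Rabs_mult, (Rabs_pos_eq (b - a)) by lra.
  apply Rmult_le_compat_r; [lra | exact (HM c Hc)].
Qed.

Lemma lipschitz_of_derive_bounded (L : R) :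
  (forall x, Rabs (df x) <= L) -> lipschitz L f.
Proof.
  intros HL x y. destruct (Rle_or_lt x y) as [Hxy|Hxy].
  - rewrite (Rabs_pos_eq (y - x)) by lra. apply Rabs_increment_le; auto.
  - rewrite Rabs_minus_sym, (Rabs_minus_sym y), (Rabs_pos_eq (x - y)) by lra.
    apply Rabs_increment_le; [lra | auto].
Qed.

End MeanValue.

Lemma lipschitz_comp (L1 L2 : R) (f g : R -> R) : 0 <= L1 ->
  lipschitz L1 f -> lipschitz L2 g -> lipschitz (L1 * L2) (fun x => f (g x)).
Proof.
  intros HL1 Hf Hg x y. rewrite Rmult_assoc.
  eapply Rle_trans; [apply Hf | apply Rmult_le_compat_l; auto].
Qed.

Lemma lipschitz_scal (c L : R) (f : R -> R) : 0 <= c ->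
  lipschitz L f -> lipschitz (c * L) (fun x => c * f x).
Proof.
  intros Hc Hf x y. rewrite <- Rmult_minus_distr_l, Rabs_mult, Rabs_pos_eq, Rmult_assoc by lra.
  apply Rmult_le_compat_l; auto.
Qed.

Lemma stays_between (f : R -> R) (a b s0 : R) : continuity f -> a < f s0 < b ->
  (forall s, s0 <= s -> f s <> a /\ f s <> b) -> forall s, s0 <= s -> a < f s < b.
Proof.
  intros Hc H0 Hab s Hs.
  assert (Hhit : forall y, Rmin (f s0) (f s) <= y <= Rmax (f s0) (f s) ->
            exists t, s0 <= t /\ f t = y).
  { intros y Hy. destruct (IVT_gen f s0 s y Hc Hy) as [t [Ht Et]].
    rewrite Rmin_left in Ht by lra. exists t. split; [lra | exact Et]. }
  destruct (Rlt_or_le a (f s)) as [Ha|Ha]; [destruct (Rlt_or_le (f s) b) as [Hb|Hb]|].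
  - split; assumption.
  - destruct (Hhit b) as [t [Ht Et]].
    { split; [apply Rle_trans with (f s0); [apply Rmin_l | lra]
             | apply Rle_trans with (f s); [lra | apply Rmax_r]]. }
    exfalso. exact (proj2 (Hab t Ht) Et).
  - destruct (Hhit a) as [t [Ht Et]].
    { split; [apply Rle_trans with (f s); [apply Rmin_r | lra]
             | apply Rle_trans with (f s0); [lra | apply Rmax_l]]. }
    exfalso. exact (proj1 (Hab t Ht) Et).
Qed.

Lemma decreases_right_after (f : R -> R) (x l r : R) :
  is_derive f x l -> l < 0 -> 0 < r -> exists y, x < y /\ f x - r < f y < f x.
Proof.
  intros Hd Hl Hr. apply is_derive_Reals in Hd.
  destruct (Hd (- l / 2)) as [[d Hd0] Hdd]; [lra|]. simpl in Hdd.
  set (h := Rmin (d / 2) (r / (- 2 * l))).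
  assert (Hh : 0 < h) by (apply Rmin_glb_lt; apply Rdiv_lt_0_compat; lra).
  assert (Hhd : h <= d / 2) by apply Rmin_l.
  assert (Hhr : h * (- 2 * l) <= r).
  { assert (Hh' : h <= r / (- 2 * l)) by apply Rmin_r.
    apply (Rmult_le_compat_r (- 2 * l)) in Hh'; [|lra]. field_simplify in Hh'; lra. }
  specialize (Hdd h ltac:(lra) ltac:(rewrite Rabs_pos_eq; lra)).
  apply Rabs_def2 in Hdd.
  set (Z := (f (x + h) - f x) / h) in Hdd.
  assert (E : f (x + h) - f x = Z * h) by (unfold Z; field; lra).
  exists (x + h). split; [lra | split; nra].
Qed.

Lemma barbalat (f g e : R -> R) (l L : R) :
  (forall x, is_derive f x (g x + e x)) -> lipschitz L g ->
  is_lim f p_infty l -> is_lim e p_infty 0 -> is_lim g p_infty 0.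
Proof.
  rewrite !is_lim_p_infty_iff. intros Hd Hg Hf He eps Heps.
  set (L' := Rabs L + 1).
  assert (HL : L <= L') by (unfold L'; pose proof (Rle_abs L); lra).
  assert (HL' : 0 < L') by (unfold L'; pose proof (Rabs_pos L); lra).
  set (d := eps / (4 * L')).
  assert (Hd0 : 0 < d) by (apply Rdiv_lt_0_compat; lra).
  assert (HLd : L' * d = eps / 4) by (unfold d; field; lra).
  destruct (Hf (eps * d / 8)) as [Nf HNf]; [nra|].
  destruct (He (eps / 4)) as [Ne HNe]; [lra|].
  exists (Rmax Nf Ne). intros t Ht. rewrite Rminus_0_r.
  pose proof (Rmax_l Nf Ne). pose proof (Rmax_r Nf Ne).
  assert (Hinc :
    Rabs ((f (t + d) - g t * (t + d)) - (f t - g t * t)) <= eps / 2 * (t + d - t)).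
  { apply (Rabs_increment_le (fun x => f x - g t * x) (fun x => g x + e x - g t)); [|lra|].
    - intros x. apply (is_derive_minus f (fun x => g t * x)); [apply Hd|].
      auto_derive; [exact I | ring].
    - intros x Hx. specialize (HNe x ltac:(lra)). rewrite Rminus_0_r in HNe.
      pose proof (Hg t x) as Hgx. rewrite (Rabs_pos_eq (x - t)) in Hgx by lra.
      assert (L * (x - t) <= L' * d) by (apply Rle_trans with (L' * (x - t));
        [apply Rmult_le_compat_r | apply Rmult_le_compat_l]; lra).
      replace (g x + e x - g t) with ((g x - g t) + e x) by ring.
      pose proof (Rabs_triang (g x - g t) (e x)). lra. }
  pose proof (HNf t ltac:(lra)) as Ht0. pose proof (HNf (t + d) ltac:(lra)) as Htd.
  apply Rabs_def2 in Ht0. apply Rabs_def2 in Htd. apply Rabs_le_between in Hinc.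
  replace (t + d - t) with d in Hinc by ring.
  apply Rabs_def1; nra.
Qed.

Lemma barbalat_integral (F dF h : R -> R) (a M L : R) :
  (forall x, is_derive F x (dF x)) ->
  (forall x, a <= x -> 0 <= h x <= dF x) ->
  (forall x, a <= x -> F x <= M) ->
  lipschitz L h -> is_lim h p_infty 0.
Proof.
  intros HdF Hh HM HL. apply is_lim_p_infty_iff. intros eps Heps.
  assert (Hmono : forall x y, a <= x <= y -> F x <= F y).
  { intros x y Hxy. assert (0 * (y - x) <= F y - F x); [|lra].
    apply (increment_ge F dF HdF); [lra|]. intros z Hz. destruct (Hh z ltac:(lra)). lra. }
  destruct (completeness (fun y => exists x, a <= x /\ y = F x)) as [S [HSub HSlub]].
  { exists M. intros y [x [Hx ->]]. auto. }
  { exists (F a), a. split; [lra | reflexivity]. }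
  set (L' := Rabs L + 1).
  assert (HL1 : L <= L') by (unfold L'; pose proof (Rle_abs L); lra).
  assert (HL' : 0 < L') by (unfold L'; pose proof (Rabs_pos L); lra).
  set (d := eps / (2 * L')).
  assert (Hd0 : 0 < d) by (apply Rdiv_lt_0_compat; lra).
  assert (HLd : L' * d = eps / 2) by (unfold d; field; lra).
  assert (HN : exists N, a <= N /\ S - eps * d / 2 < F N).
  { apply NNPP. intros Hn.
    assert (S <= S - eps * d / 2); [|nra].
    apply HSlub. intros y [x [Hx ->]]. apply Rnot_lt_le. intros Hlt. apply Hn. exists x. auto. }
  destruct HN as [N [HaN HFN]].
  exists N. intros t Ht. rewrite Rminus_0_r.
  destruct (Hh t ltac:(lra)) as [Hh0 _]. rewrite Rabs_pos_eq by lra.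
  apply Rnot_le_lt. intros Hge.
  assert (Hinc : eps / 2 * (t + d - t) <= F (t + d) - F t).
  { apply (increment_ge F dF HdF); [lra|]. intros x Hx.
    pose proof (HL t x) as Hhx. rewrite (Rabs_pos_eq (x - t)) in Hhx by lra.
    assert (L * (x - t) <= L' * d) by (apply Rle_trans with (L' * (x - t));
      [apply Rmult_le_compat_r | apply Rmult_le_compat_l]; lra).
    apply Rabs_le_between in Hhx. destruct (Hh x ltac:(lra)). lra. }
  assert (F (t + d) <= S) by (apply HSub; exists (t + d); split; [lra | reflexivity]).
  assert (F N <= F t) by (apply Hmono; lra).
  replace (t + d - t) with d in Hinc by ring. nra.
Qed.

Lemma sin_ge_third (x : R) : 0 <= x <= PI / 2 -> x / 3 <= sin x.
Proof.
  intros Hx. pose proof PI_4.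
  destruct (sin_bound x 0 ltac:(lra) ltac:(lra)) as [Hlb _].
  unfold sin_approx, sin_term in Hlb. simpl in Hlb.
  assert (x * x <= 4) by nra. nra.
Qed.

Lemma Rabs_le_3_Rabs_sin (x : R) : Rabs x <= PI / 2 -> Rabs x <= 3 * Rabs (sin x).
Proof.
  intros Hx. destruct (Rle_or_lt 0 x) as [H0|H0].
  - rewrite Rabs_pos_eq in * by lra. pose proof (sin_ge_third x ltac:(lra)).
    rewrite Rabs_pos_eq; lra.
  - rewrite Rabs_left in * by lra. pose proof (sin_ge_third (- x) ltac:(lra)) as Hs.
    rewrite sin_neg in Hs. rewrite Rabs_left1; lra.
Qed.

Lemma Rabs_2_sin_cos_le (x : R) : Rabs (2 * sin x * cos x) <= 1.
Proof. rewrite <- sin_2a. apply Rabs_le, SIN_bound. Qed.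

Lemma sin_lipschitz : lipschitz 1 sin.
Proof.
  apply (lipschitz_of_derive_bounded sin cos); [apply is_derive_sin|].
  intros x. apply Rabs_le, COS_bound.
Qed.

Lemma cos_lipschitz : lipschitz 1 cos.
Proof.
  apply (lipschitz_of_derive_bounded cos (fun x => - sin x)); [apply is_derive_cos|].
  intros x. rewrite Rabs_Ropp. apply Rabs_le, SIN_bound.
Qed.

Lemma sin_sqr_lipschitz : lipschitz 1 (fun x => sin x ^ 2).
Proof.
  apply (lipschitz_of_derive_bounded _ (fun x => 2 * sin x * cos x)); [|apply Rabs_2_sin_cos_le].
  intros x. auto_derive; [exact I | ring].
Qed.

Lemma pow_mult_le_factors (x y z : R) (m n : nat) : (1 <= m)%nat -> (1 <= n)%nat ->
  Rabs x <= 1 -> Rabs y <= 1 -> Rabs z <= 1 ->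
  Rabs (x ^ m * y ^ n * z ^ 3) <= Rabs x /\ Rabs (x ^ m * y ^ n * z ^ 3) <= Rabs y /\
  Rabs (x ^ m * y ^ n * z ^ 3) <= Rabs z.
Proof.
  intros Hm Hn Hx Hy Hz.
  rewrite !Rabs_mult, <- !RPow_abs.
  assert (Hle : forall a k, 0 <= a <= 1 -> (1 <= k)%nat -> 0 <= a ^ k <= a).
  { intros a k Ha Hk. destruct k as [|k]; [lia|]. simpl.
    pose proof (pow_le a k (proj1 Ha)). pose proof (pow_incr a 1 k Ha). rewrite pow1 in *. nra. }
  pose proof (Rabs_pos x). pose proof (Rabs_pos y). pose proof (Rabs_pos z).
  destruct (Hle (Rabs x) m) as [A0 A1]; [lra | exact Hm|].
  destruct (Hle (Rabs y) n) as [B0 B1]; [lra | exact Hn|].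
  destruct (Hle (Rabs z) 3%nat) as [C0 C1]; [lra | lia|].
  set (P := Rabs x ^ m * Rabs y ^ n).
  assert (HPx : 0 <= P <= Rabs x) by (unfold P; split; nra).
  assert (HPy : P <= Rabs y) by (unfold P; nra).
  assert (P * Rabs z ^ 3 <= P) by nra.
  assert (P * Rabs z ^ 3 <= Rabs z ^ 3) by nra.
  split; [|split]; lra.
Qed.

(* The rate of alpha on the diagonal alpha = theta. *)
Definition kappa (p q : nat) (x : R) : R := INR q * cos x ^ 2 - INR p * sin x ^ 2.

Lemma Rabs_kappa_le (p q : nat) (x : R) : Rabs (kappa p q x) <= INR q + INR p.
Proof.
  unfold kappa. pose proof (pos_INR p). pose proof (pos_INR q).
  pose proof (sin2_cos2 x) as E. unfold Rsqr in E.
  apply Rabs_le. nra.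
Qed.

Lemma kappa_lipschitz (p q : nat) : lipschitz (INR q + INR p) (kappa p q).
Proof.
  apply (lipschitz_of_derive_bounded _ (fun x => - (INR q + INR p) * (2 * sin x * cos x))).
  - intros x. unfold kappa. auto_derive; [exact I | ring].
  - intros x. pose proof (pos_INR p). pose proof (pos_INR q).
    rewrite Rabs_mult, Rabs_Ropp, Rabs_pos_eq by lra.
    pose proof (Rabs_2_sin_cos_le x). nra.
Qed.

Lemma kappa_factor (p q : nat) (a x : R) : kappa p q a = 0 ->
  kappa p q x = - (INR q + INR p) * sin (x + a) * sin (x - a).
Proof.
  unfold kappa. intros Ha. rewrite sin_plus, sin_minus.
  assert (Ea : sin a ^ 2 + cos a ^ 2 = 1) by (rewrite <- (sin2_cos2 a); unfold Rsqr; ring).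
  assert (Ex : sin x ^ 2 + cos x ^ 2 = 1) by (rewrite <- (sin2_cos2 x); unfold Rsqr; ring).
  assert (E1 : (sin x ^ 2 + cos x ^ 2) * (INR q * cos a ^ 2 - INR p * sin a ^ 2) = 0)
    by (rewrite Ha; ring).
  assert (E2 : (INR q * cos x ^ 2 - INR p * sin x ^ 2) * (sin a ^ 2 + cos a ^ 2 - 1) = 0)
    by (rewrite Ea; ring).
  lra.
Qed.

Lemma Rabs_gap_remainder_le (p q : nat) (x u : R) :
  Rabs ((cos u - 1) * kappa p q x - (INR q + INR p + 3) * sin x * cos x * sin u)
  <= (2 * (INR q + INR p) + 3) * Rabs u.
Proof.
  pose proof (pos_INR p). pose proof (pos_INR q).
  pose proof (cos_lipschitz 0 u) as Hcos. pose proof (sin_lipschitz 0 u) as Hsin.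
  rewrite cos_0, !Rminus_0_r, Rmult_1_l in Hcos. rewrite sin_0, !Rminus_0_r, Rmult_1_l in Hsin.
  pose proof (Rabs_kappa_le p q x). pose proof (Rabs_2_sin_cos_le x).
  replace ((INR q + INR p + 3) * sin x * cos x * sin u)
    with ((INR q + INR p + 3) / 2 * (2 * sin x * cos x) * sin u) by field.
  set (X := 2 * sin x * cos x) in *.
  unfold Rminus at 1. eapply Rle_trans; [apply Rabs_triang|].
  rewrite Rabs_Ropp, !Rabs_mult, (Rabs_pos_eq ((INR q + INR p + 3) / 2)) by lra.
  pose proof (Rabs_pos u). pose proof (Rabs_pos (kappa p q x)). pose proof (Rabs_pos X).
  assert (Rabs (cos u - 1) * Rabs (kappa p q x) <= Rabs u * (INR q + INR p))
    by (apply Rmult_le_compat; try apply Rabs_pos; lra).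
  assert (Rabs X * Rabs (sin u) <= 1 * Rabs u)
    by (apply Rmult_le_compat; try apply Rabs_pos; lra).
  nra.
Qed.

Lemma alpha0_between (p q : nat) : (1 <= p)%nat -> (1 <= q)%nat -> 0 < alpha0 p q < PI / 2.
Proof.
  intros hp hq. unfold alpha0. pose proof (atan_bound (sqrt (INR q / INR p))).
  split; [|lra].
  rewrite <- atan_0. apply atan_increasing, sqrt_lt_R0, Rdiv_lt_0_compat; apply lt_0_INR; lia.
Qed.

Lemma kappa_alpha0 (p q : nat) : (1 <= p)%nat -> kappa p q (alpha0 p q) = 0.
Proof.
  intros hp. unfold kappa, alpha0. set (t := sqrt (INR q / INR p)).
  assert (Hp : 0 < INR p) by (apply lt_0_INR; lia).
  assert (Ht : t * t = INR q / INR p)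
    by (apply sqrt_sqrt, Rdiv_le_0_compat; [apply pos_INR | exact Hp]).
  pose proof (atan_bound t).
  assert (Hc : 0 < cos (atan t)) by (apply cos_gt_0; lra).
  assert (Hs : sin (atan t) = t * cos (atan t)).
  { rewrite <- (tan_atan t) at 2. unfold tan. field. lra. }
  rewrite Hs. replace (INR q) with (INR p * (t * t)) by (rewrite Ht; field; lra). ring.
Qed.

Section Trajectory.

Variables (p q : nat) (theta alpha : R -> R).
Hypothesis traj : is_trajectory p q theta alpha.

Definition gap (s : R) : R := alpha s - theta s.

Lemma ex_derive_theta (s : R) : ex_derive theta s.
Proof. eexists. apply traj. Qed.

Lemma Derive_theta (s : R) :
  Derive theta s = 3 * sin (theta s) * cos (theta s) * sin (gap s).
Proof. exact (is_derive_unique _ _ _ (proj1 (traj s))). Qed.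

Lemma is_derive_gap (s : R) : is_derive gap s
  (cos (gap s) * kappa p q (theta s)
   - (INR q + INR p + 3) * sin (theta s) * cos (theta s) * sin (gap s)).
Proof.
  destruct (traj s) as [Ht Ha].
  replace (cos (gap s) * _ - _)
    with (INR q * cos (alpha s) * cos (theta s) - INR p * sin (alpha s) * sin (theta s)
          - 3 * sin (theta s) * cos (theta s) * sin (alpha s - theta s)).
  - apply (is_derive_minus alpha theta); assumption.
  - unfold gap, kappa. replace (alpha s) with (theta s + (alpha s - theta s)) at 1 2 by ring.
    rewrite cos_plus, sin_plus. ring.
Qed.

Lemma ex_derive_gap (s : R) : ex_derive gap s.
Proof. eexists. apply is_derive_gap. Qed.

Lemma Derive_gap (s : R) : Derive gap s =
  cos (gap s) * kappa p q (theta s)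
  - (INR q + INR p + 3) * sin (theta s) * cos (theta s) * sin (gap s).
Proof. exact (is_derive_unique _ _ _ (is_derive_gap s)). Qed.

Lemma continuity_theta : continuity theta.
Proof. exact (continuity_of_derive theta _ (fun s => proj1 (traj s))). Qed.

Lemma continuity_gap : continuity gap.
Proof. exact (continuity_of_derive gap _ is_derive_gap). Qed.

(* The logarithmic derivative of (sin theta cos theta)^2 is 6 cos (2 theta) sin u >= -6. *)
Definition theta_barrier (s : R) : R := (sin (theta s) * cos (theta s)) ^ 2 * exp (6 * s).

Lemma theta_barrier_nondecreasing (a b : R) : a <= b -> theta_barrier a <= theta_barrier b.
Proof.
  intros Hab. assert (0 * (b - a) <= theta_barrier b - theta_barrier a); [|lra].
  apply (increment_ge theta_barrier
    (fun s => 6 * (sin (theta s) * cos (theta s)) ^ 2 * exp (6 * s)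
              * ((cos (theta s) ^ 2 - sin (theta s) ^ 2) * sin (gap s) + 1))); [|lra|].
  - intros s. unfold theta_barrier. auto_derive; [repeat split; apply ex_derive_theta|].
    rewrite Derive_theta. ring.
  - intros s _. pose proof (sin2_cos2 (theta s)) as E. unfold Rsqr in E.
    pose proof (SIN_bound (gap s)). pose proof (exp_pos (6 * s)).
    apply Rmult_le_pos; [apply Rmult_le_pos; [nra | lra] | nra].
Qed.

Lemma theta_stays (s0 : R) : 0 < theta s0 < PI / 2 ->
  forall s, s0 <= s -> 0 < theta s < PI / 2.
Proof.
  intros H0. apply (stays_between theta 0 (PI / 2) s0 continuity_theta H0).
  intros s Hs.
  assert (Hpos : 0 < theta_barrier s).
  { apply Rlt_le_trans with (theta_barrier s0); [|apply theta_barrier_nondecreasing, Hs].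
    unfold theta_barrier. apply Rmult_lt_0_compat; [|apply exp_pos].
    apply pow_lt, Rmult_lt_0_compat; [apply sin_gt_0 | apply cos_gt_0]; lra. }
  unfold theta_barrier in Hpos.
  split; intros E; rewrite E, ?sin_0, ?cos_PI2 in Hpos; lra.
Qed.

Lemma gap_enters (s0 : R) : 0 < theta s0 < PI / 2 -> - (PI / 2) <= gap s0 <= PI / 2 ->
  exists s1, s0 <= s1 /\ - (PI / 2) < gap s1 < PI / 2.
Proof.
  intros Ht Hg. pose proof PI_RGT_0.
  assert (Hsc : 0 < (INR q + INR p + 3) * sin (theta s0) * cos (theta s0)).
  { pose proof (pos_INR p). pose proof (pos_INR q).
    apply Rmult_lt_0_compat; [apply Rmult_lt_0_compat; [lra|] |];
      [apply sin_gt_0 | apply cos_gt_0]; lra. }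
  pose proof (is_derive_gap s0) as Hd.
  destruct (Req_dec (gap s0) (PI / 2)) as [Eq|Ne].
  { rewrite Eq, cos_PI2, sin_PI2 in Hd.
    destruct (decreases_right_after gap s0 _ PI Hd) as [s1 Hs1]; [lra | lra |].
    exists s1. lra. }
  destruct (Req_dec (gap s0) (- (PI / 2))) as [Eq'|Ne'].
  { apply is_derive_opp in Hd. rewrite Eq', cos_neg, sin_neg, cos_PI2, sin_PI2 in Hd.
    destruct (decreases_right_after (fun s => - gap s) s0 _ PI Hd) as [s1 Hs1];
      [unfold opp; simpl; lra | lra |].
    exists s1. cbv beta in Hs1. lra. }
  exists s0. lra.
Qed.

Lemma gap_lipschitz : lipschitz (2 * (INR q + INR p) + 3) gap.
Proof.
  eapply lipschitz_of_derive_bounded; [exact is_derive_gap|]. intros s.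
  pose proof (pos_INR p). pose proof (pos_INR q).
  pose proof (Rabs_kappa_le p q (theta s)). pose proof (Rabs_2_sin_cos_le (theta s)).
  assert (Rabs (cos (gap s)) <= 1) by apply Rabs_le, COS_bound.
  assert (Rabs (sin (gap s)) <= 1) by apply Rabs_le, SIN_bound.
  unfold Rminus. eapply Rle_trans; [apply Rabs_triang|].
  rewrite Rabs_Ropp, Rabs_mult, (Rabs_mult _ (sin (gap s))).
  replace ((INR q + INR p + 3) * sin (theta s) * cos (theta s))
    with ((INR q + INR p + 3) / 2 * (2 * sin (theta s) * cos (theta s))) by field.
  rewrite Rabs_mult, (Rabs_pos_eq ((INR q + INR p + 3) / 2)) by lra.
  pose proof (Rabs_pos (cos (gap s))). pose proof (Rabs_pos (sin (gap s))).
  pose proof (Rabs_pos (2 * sin (theta s) * cos (theta s))).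
  pose proof (Rabs_pos (kappa p q (theta s))).
  assert (Rabs (cos (gap s)) * Rabs (kappa p q (theta s)) <= 1 * (INR q + INR p))
    by (apply Rmult_le_compat; lra).
  assert (Rabs (2 * sin (theta s) * cos (theta s)) * Rabs (sin (gap s)) <= 1 * 1)
    by (apply Rmult_le_compat; lra).
  nra.
Qed.

Lemma theta_lipschitz : lipschitz 3 theta.
Proof.
  apply (lipschitz_of_derive_bounded theta
    (fun s => 3 * sin (theta s) * cos (theta s) * sin (gap s))); [apply traj|].
  intros s. pose proof (Rabs_2_sin_cos_le (theta s)). pose proof (SIN_bound (gap s)).
  replace (3 * sin (theta s) * cos (theta s) * sin (gap s))
    with (3 / 2 * (2 * sin (theta s) * cos (theta s)) * sin (gap s)) by field.
  rewrite Rabs_mult, Rabs_mult, (Rabs_pos_eq (3 / 2)) by lra.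
  assert (Rabs (sin (gap s)) <= 1) by apply Rabs_le, SIN_bound.
  pose proof (Rabs_pos (sin (gap s))). pose proof (Rabs_pos (2 * sin (theta s) * cos (theta s))).
  assert (Rabs (2 * sin (theta s) * cos (theta s)) * Rabs (sin (gap s)) <= 1 * 1)
    by (apply Rmult_le_compat; lra).
  nra.
Qed.

Definition lyapunov (s : R) : R :=
  sin (theta s) ^ q * cos (theta s) ^ p * cos (gap s) ^ 3.

Hypotheses (hp : (1 <= p)%nat) (hq : (1 <= q)%nat).

Lemma is_derive_lyapunov (s : R) : is_derive lyapunov s
  (3 * (INR q + INR p + 3) * sin (theta s) ^ S q * cos (theta s) ^ S p
   * cos (gap s) ^ 2 * sin (gap s) ^ 2).
Proof.
  unfold lyapunov. auto_derive; [repeat split; auto using ex_derive_theta, ex_derive_gap|].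
  rewrite Derive_theta, Derive_gap. unfold kappa.
  destruct p as [|p']; [lia|]. destruct q as [|q']; [lia|].
  rewrite !S_INR. simpl. ring.
Qed.

Lemma Rabs_lyapunov_le (s : R) :
  Rabs (lyapunov s) <= Rabs (sin (theta s)) /\ Rabs (lyapunov s) <= Rabs (cos (theta s)) /\
  Rabs (lyapunov s) <= Rabs (cos (gap s)).
Proof.
  apply pow_mult_le_factors; auto; apply Rabs_le; auto using SIN_bound, COS_bound.
Qed.

Section Trapped.

Variable s1 : R.
Hypotheses (theta_s1 : 0 < theta s1 < PI / 2) (gap_s1 : - (PI / 2) < gap s1 < PI / 2).

Lemma lyapunov_nondecreasing (a b : R) : s1 <= a <= b -> lyapunov a <= lyapunov b.
Proof.
  intros Hab. assert (0 * (b - a) <= lyapunov b - lyapunov a); [|lra].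
  apply (increment_ge lyapunov _ is_derive_lyapunov); [lra|]. intros s Hs.
  destruct (theta_stays s1 theta_s1 s ltac:(lra)).
  assert (0 < sin (theta s)) by (apply sin_gt_0; lra).
  assert (0 < cos (theta s)) by (apply cos_gt_0; lra).
  pose proof (pos_INR p). pose proof (pos_INR q).
  apply Rmult_le_pos; [|apply pow2_ge_0].
  apply Rmult_le_pos; [|apply pow2_ge_0].
  apply Rmult_le_pos; [apply Rmult_le_pos; [lra|] | apply pow_le; lra].
  apply pow_le; lra.
Qed.

Lemma lyapunov_s1_pos : 0 < lyapunov s1.
Proof.
  unfold lyapunov.
  apply Rmult_lt_0_compat; [apply Rmult_lt_0_compat|]; apply pow_lt;
    [apply sin_gt_0 | apply cos_gt_0 | apply cos_gt_0]; lra.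
Qed.

Lemma gap_stays : forall s, s1 <= s -> - (PI / 2) < gap s < PI / 2.
Proof.
  apply (stays_between gap _ _ s1 continuity_gap gap_s1). intros s Hs.
  assert (Hz : 0 < Rabs (cos (gap s))).
  { destruct (Rabs_lyapunov_le s) as [_ [_ H]]. pose proof lyapunov_s1_pos.
    pose proof (lyapunov_nondecreasing s1 s ltac:(lra)). pose proof (Rle_abs (lyapunov s)).
    lra. }
  split; intros E; rewrite E, ?cos_neg, cos_PI2, Rabs_R0 in Hz; lra.
Qed.

Lemma trapped (s : R) : s1 <= s ->
  lyapunov s1 <= sin (theta s) /\ lyapunov s1 <= cos (theta s) /\ lyapunov s1 <= cos (gap s).
Proof.
  intros Hs. destruct (theta_stays s1 theta_s1 s Hs). pose proof (gap_stays s Hs).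
  destruct (Rabs_lyapunov_le s) as [HS [HC HZ]].
  rewrite (Rabs_pos_eq (sin (theta s))) in HS by (apply sin_ge_0; lra).
  rewrite (Rabs_pos_eq (cos (theta s))) in HC by (apply cos_ge_0; lra).
  rewrite (Rabs_pos_eq (cos (gap s))) in HZ by (apply cos_ge_0; lra).
  pose proof (lyapunov_nondecreasing s1 s ltac:(lra)). pose proof (Rle_abs (lyapunov s)).
  lra.
Qed.

Lemma lyapunov_rate_ge (s : R) : s1 <= s ->
  3 * (lyapunov s1 ^ S q * lyapunov s1 ^ S p * lyapunov s1 ^ 2) * sin (gap s) ^ 2
  <= 3 * (INR q + INR p + 3) * sin (theta s) ^ S q * cos (theta s) ^ S p
     * cos (gap s) ^ 2 * sin (gap s) ^ 2.
Proof.
  intros Hs. pose proof lyapunov_s1_pos as HQ1. set (Q1 := lyapunov s1) in *.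
  destruct (trapped s Hs) as [HS [HC HZ]]. fold Q1 in HS, HC, HZ.
  set (P := sin (theta s) ^ S q * cos (theta s) ^ S p * cos (gap s) ^ 2).
  assert (HP : Q1 ^ S q * Q1 ^ S p * Q1 ^ 2 <= P).
  { unfold P. apply Rmult_le_compat; [| apply pow2_ge_0 | | apply pow_incr; split; lra].
    - apply Rmult_le_pos; apply pow_le; lra.
    - apply Rmult_le_compat; try (apply pow_le; lra); apply pow_incr; split; lra. }
  replace (3 * (INR q + INR p + 3) * sin (theta s) ^ S q * cos (theta s) ^ S p
           * cos (gap s) ^ 2 * sin (gap s) ^ 2)
    with (3 * (INR q + INR p + 3) * P * sin (gap s) ^ 2) by (unfold P; ring).
  apply Rmult_le_compat_r; [apply pow2_ge_0|].
  pose proof (pos_INR p). pose proof (pos_INR q).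
  assert (0 <= Q1 ^ S q * Q1 ^ S p * Q1 ^ 2)
    by (apply Rmult_le_pos; [apply Rmult_le_pos|]; apply pow_le; lra).
  nra.
Qed.

Lemma gap_lim0 : is_lim gap p_infty 0.
Proof.
  pose proof lyapunov_s1_pos as HQ1. set (Q1 := lyapunov s1) in *.
  set (c := 3 * (Q1 ^ S q * Q1 ^ S p * Q1 ^ 2)).
  assert (Hc : 0 < c)
    by (unfold c; apply Rmult_lt_0_compat; [|apply Rmult_lt_0_compat; [apply Rmult_lt_0_compat|]];
        try apply pow_lt; lra).
  assert (Hh : is_lim (fun s => c * sin (gap s) ^ 2) p_infty 0).
  { apply (barbalat_integral lyapunov _ _ s1 1 (c * (1 * (2 * (INR q + INR p) + 3)))
             is_derive_lyapunov).
    - intros s Hs. split; [apply Rmult_le_pos; [lra | apply pow2_ge_0]|].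
      exact (lyapunov_rate_ge s Hs).
    - intros s _. destruct (Rabs_lyapunov_le s) as [HS _].
      assert (Rabs (sin (theta s)) <= 1) by apply Rabs_le, SIN_bound.
      pose proof (Rle_abs (lyapunov s)). lra.
    - apply lipschitz_scal; [lra|].
      apply (lipschitz_comp _ _ (fun x => sin x ^ 2) gap);
        [lra | apply sin_sqr_lipschitz | apply gap_lipschitz]. }
  apply (is_lim_0_of_sqr_le gap (fun s => c * sin (gap s) ^ 2) (9 / c) s1); [|exact Hh].
  intros s Hs. pose proof (gap_stays s Hs).
  assert (Hj : Rabs (gap s) <= 3 * Rabs (sin (gap s)))
    by (apply Rabs_le_3_Rabs_sin, Rabs_le; lra).
  rewrite Rabs_mult, (Rabs_pos_eq c), <- RPow_abs, <- (pow2_abs (gap s)) by lra.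
  replace (9 / c * (c * Rabs (sin (gap s)) ^ 2)) with ((3 * Rabs (sin (gap s))) ^ 2)
    by (field; lra).
  apply pow_incr. split; [apply Rabs_pos | exact Hj].
Qed.

Lemma kappa_theta_lim0 : is_lim (fun s => kappa p q (theta s)) p_infty 0.
Proof.
  pose proof (pos_INR p). pose proof (pos_INR q).
  set (e := fun s => (cos (gap s) - 1) * kappa p q (theta s)
                     - (INR q + INR p + 3) * sin (theta s) * cos (theta s) * sin (gap s)).
  apply (barbalat gap _ e 0 ((INR q + INR p) * 3)).
  - intros s. replace (kappa p q (theta s) + e s) with
      (cos (gap s) * kappa p q (theta s)
       - (INR q + INR p + 3) * sin (theta s) * cos (theta s) * sin (gap s)) by (unfold e; ring).
    apply is_derive_gap.
  - apply (lipschitz_comp _ _ (kappa p q) theta);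
      [lra | apply kappa_lipschitz | apply theta_lipschitz].
  - exact gap_lim0.
  - apply (is_lim_of_Rabs_le e gap 0 (2 * (INR q + INR p) + 3) 0); [|exact gap_lim0].
    intros s _. rewrite Rminus_0_r. apply Rabs_gap_remainder_le.
Qed.

Lemma theta_lim : is_lim theta p_infty (alpha0 p q).
Proof.
  pose proof lyapunov_s1_pos as HQ1. set (Q1 := lyapunov s1) in *.
  destruct (alpha0_between p q hp hq) as [Ha0 Ha1]. set (a := alpha0 p q) in *.
  assert (Hsa : 0 < sin a) by (apply sin_gt_0; lra).
  assert (Hca : 0 < cos a) by (apply cos_gt_0; lra).
  assert (Hn : 0 < INR q + INR p) by (pose proof (pos_INR p); pose proof (lt_0_INR q hq); lra).
  set (D := (INR q + INR p) * (Q1 * sin a)).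
  assert (HD : 0 < D) by (apply Rmult_lt_0_compat; [|apply Rmult_lt_0_compat]; lra).
  apply (is_lim_of_Rabs_le theta (fun s => kappa p q (theta s)) a (3 / D) s1);
    [|exact kappa_theta_lim0].
  intros s Hs. destruct (theta_stays s1 theta_s1 s Hs). destruct (trapped s Hs) as [HS [HC _]].
  fold Q1 in HS, HC.
  rewrite (kappa_factor p q a (theta s) (kappa_alpha0 p q hp)).
  assert (Hplus : Q1 * sin a <= sin (theta s + a)) by (rewrite sin_plus; nra).
  assert (Hj : Rabs (theta s - a) <= 3 * Rabs (sin (theta s - a)))
    by (apply Rabs_le_3_Rabs_sin, Rabs_le; lra).
  rewrite Rabs_mult, Rabs_mult, Rabs_Ropp, (Rabs_pos_eq (INR q + INR p)),
    (Rabs_pos_eq (sin (theta s + a))) by nra.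
  apply Rle_trans with (3 * Rabs (sin (theta s - a))); [exact Hj|].
  apply (Rmult_le_reg_l D); [exact HD|].
  replace (D * (3 / D * ((INR q + INR p) * sin (theta s + a) * Rabs (sin (theta s - a)))))
    with (3 * ((INR q + INR p) * sin (theta s + a) * Rabs (sin (theta s - a)))) by (field; lra).
  pose proof (Rabs_pos (sin (theta s - a))).
  assert (0 <= (INR q + INR p) * Rabs (sin (theta s - a)) * (sin (theta s + a) - Q1 * sin a))
    by (apply Rmult_le_pos; [apply Rmult_le_pos|]; lra).
  unfold D. nra.
Qed.

End Trapped.

End Trajectory.

Theorem lemma4p10 (p q : nat) (hp : (1 <= p)%nat) (hq : (1 <= q)%nat)
  (theta alpha : R -> R) (s0 : R)
  (htraj : is_trajectory p q theta alpha)
  (h1 : 0 < theta s0) (h2 : theta s0 < PI / 2)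
  (h3 : theta s0 - PI / 2 <= alpha s0) (h4 : alpha s0 <= theta s0 + PI / 2) :
  is_lim theta p_infty (alpha0 p q) /\ is_lim alpha p_infty (alpha0 p q).
Proof.
  destruct (gap_enters p q theta alpha htraj s0) as [s1 [Hs01 Hgap1]];
    [lra | unfold gap; lra |].
  pose proof (theta_stays p q theta alpha htraj s0 (conj h1 h2) s1 Hs01) as Htheta1.
  pose proof (theta_lim p q theta alpha htraj hp hq s1 Htheta1 Hgap1) as Htheta.
  split; [exact Htheta|].
  apply (is_lim_ext (fun s => gap theta alpha s + theta s)); [intros s; unfold gap; ring|].
  replace (alpha0 p q) with (0 + alpha0 p q) by ring.
  apply is_lim_plus'; [|exact Htheta].
  exact (gap_lim0 p q theta alpha htraj hp hq s1 Htheta1 Hgap1).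
Qed.
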